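(* Let $S$ be an integral domain of characteristic zero, and let $R$ be a subring of $S$ such that $(\mathbb{Q}.R)\cap S=R$. Then every monic polynomial $f\in R[x]$ of degree at least $2$ that is indecomposable over $R$ is also indecomposable over $S$; equivalently, if a monic $f\in R[x]$ can be written as $f=G(H(x))$ with $G,H\in S[x]$ both of degree at least $2$, then $f=g(h(x))$ for some $g,h\in R[x]$ both of degree at least $2$.
   Context: For a ring $A$ and $f\in A[x]$ with $\deg f\ge 2$, $f$ is called decomposable over $A$ if $f(x)=g(h(x))$ for some $g,h\in A[x]$ of degree at least $2$, and indecomposable over $A$ otherwise. $\mathbb{Q}.R$ denotes the subring of the fraction field of $S$ generated by $\mathbb{Q}$ and $R$, i.e. the set of elements $r/n$ with $r\in R$ and $n$ a positive integer. *)

From HB Require Import structures.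
From mathcomp Require Import all_boot all_order all_algebra.
Set Implicit Arguments. Unset Strict Implicit. Unset Printing Implicit Defensive.
Import Order.TTheory GRing.Theory Num.Theory.
Local Open Scope ring_scope.

Definition is_subring (S : idomainType) (R : {pred S}) : Prop :=
  [/\ (1 : S) \in R,
      (forall x y, x \in R -> y \in R -> x - y \in R) &
      (forall x y, x \in R -> y \in R -> x * y \in R)].

Definition QdotR (S : idomainType) (R : {pred S}) (z : {fraction S}) : Prop :=
  exists r : S, exists n : nat,
    [/\ r \in R, (0 < n)%N & z = (@FracField.tofrac S r) / n%:R].

Definition QdotR_cap_S_eq_R (S : idomainType) (R : {pred S}) : Prop :=
  forall s : S, QdotR R (@FracField.tofrac S s) <-> s \in R.

Definition decomposable_over (S : idomainType) (A : {pred S}) (f : {poly S}) : Prop :=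
  exists g h : {poly S},
    [/\ g \is a polyOver A, h \is a polyOver A,
        (2 < size g)%N, (2 < size h)%N & f = g \Po h].

Definition indecomposable_over (S : idomainType) (A : {pred S}) (f : {poly S}) : Prop :=
  (2 < size f)%N /\ ~ decomposable_over A f.

From HB Require Import structures.
From mathcomp Require Import all_boot all_order all_algebra zify.
Set Implicit Arguments. Unset Strict Implicit. Unset Printing Implicit Defensive.
Import GRing.Theory.
Local Open Scope ring_scope.

(* Let f = G(H(x)) be monic with G, H in S[x] of degrees m, k >= 2.
   1. Normalization: replacing H by (H - H(0)) / lc(H) and G by G(lc(H) x + H(0))
      we may assume G and H monic with H(0) = 0; degrees are unchanged.
   2. The coefficients of H lie in R, by downward induction on their index:
      if H_i is in R for all i > a (0 < a < k), then comparing coefficients of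
      x^(a + k(m-1)) in f = G(H) gives f_(a+k(m-1)) = m H_a + (terms in R),
      because G - x^m contributes only in degrees <= k(m-1) and
      H^m = P^m + (H - P) (sum of monic terms of degree k(m-1)) with
      P = H minus its coefficients of index <= a.  Since S has characteristic
      zero and (Q.R) n S = R, from m H_a in R we get H_a in R.
   3. The coefficients of G lie in R: if H is monic over R and G(H) is over R,
      the leading coefficient of G is that of G(H), and we peel it off. *)

Lemma downward_ind (P : nat -> Prop) (k : nat) :
  (forall i, (k <= i)%N -> P i) ->
  (forall a, (a < k)%N -> (forall i, (a < i)%N -> P i) -> P a) ->
  forall i, P i.
Proof.
move=> top step.
suff below : forall n i, (k - n <= i)%N -> P i by move=> i; apply: (below k); rewrite subnn.
elim=> [|n IH] i hi; first by apply: top; rewrite subn0 in hi.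
have [/IH //|lt] := leqP (k - n) i.
by apply: step => [|j hj]; [lia | apply: IH; lia].
Qed.

Section PolyCoefficients.
Variable T : nzRingType.

Lemma poly_take_lead (p : {poly T}) :
  p = take_poly (size p).-1 p + lead_coef p *: 'X^((size p).-1).
Proof.
apply/polyP=> i; rewrite coefD coef_take_poly coefZ coefXn lead_coefE.
have [lt|ge] := ltnP i (size p).-1; first by rewrite (ltn_eqF lt) mulr0 addr0.
rewrite add0r; have [->|ne] := eqVneq i (size p).-1; first by rewrite mulr1.
by rewrite mulr0 nth_default //; move: ne ge => /eqP; case: (size p) => /= [|s]; lia.
Qed.

Lemma coefM_top (p q : {poly T}) a b :
  (size p <= a.+1)%N -> (size q <= b.+1)%N -> (p * q)`_(a + b) = p`_a * q`_b.
Proof.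
move=> /leq_sizeP hp /leq_sizeP hq.
have ha : (a < (a + b).+1)%N by rewrite ltnS leq_addr.
rewrite coefM (bigD1 (Ordinal ha)) //= addKn big1 ?addr0 // => -[j hj] /= hne.
have [lt|ge] := ltnP j a; first by rewrite hq ?mulr0 //; lia.
have aj : (a < j)%N by rewrite ltn_neqAle ge andbT; apply: contra hne => /eqP e; apply/eqP/val_inj.
by rewrite hp ?mul0r.
Qed.

End PolyCoefficients.

Section MonicPowers.
Variable T : idomainType.
Implicit Types (G H p : {poly T}).

Lemma size_monic_exp p e : p \is monic -> size (p ^+ e) = ((size p).-1 * e).+1.
Proof. by move=> mp; rewrite -size_exp prednK // size_poly_gt0 monic_neq0 ?monic_exp. Qed.

(* It comes from
   H^m - P^m = (H - P) * sum_t H^(m-1-t) P^t, a sum of m monic terms of degree k(m-1). *)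
Lemma coef_monic_exp_split H k m a :
  H \is monic -> size H = k.+1 -> (a < k)%N ->
  (H ^+ m)`_(a + k * m.-1) =
    ((H - take_poly a.+1 H) ^+ m)`_(a + k * m.-1) + H`_a *+ m.
Proof.
move=> mH sH ak.
set D := take_poly a.+1 H; set P := H - D; set b := (k * m.-1)%N.
have sD : (size D <= a.+1)%N by apply: size_take_poly.
have sP : size P = k.+1.
  by rewrite size_polyDl // size_polyN sH; apply: leq_ltn_trans sD _.
have mP : P \is monic.
  by rewrite monicE lead_coefDl ?(monicP mH) // size_polyN sH; apply: leq_ltn_trans sD _.
pose M t := H ^+ (m.-1 - t) * P ^+ t.
set Q := \sum_(t < m) M t.
have HmE : H ^+ m = P ^+ m + D * Q.
  have HP : H - P = D by rewrite /P opprB addrC subrK.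
  by rewrite -HP -subrXX addrC subrK.
have term t : (t < m)%N -> size (M t) = b.+1 /\ (M t)`_b = 1.
  move=> tm; have mM : M t \is monic by rewrite monicMl ?monic_exp.
  have sM : size (M t) = b.+1.
    rewrite size_monicM ?monic_exp ?monic_neq0 ?monic_exp // !size_monic_exp // sH sP /b.
    by rewrite -!subn1; nia.
  by split => //; move/monicP: mM; rewrite lead_coefE sM.
have Qb : Q`_b = m%:R.
  rewrite coef_sum (eq_bigr (fun _ => 1)) ?sumr_const ?card_ord // => t _.
  by case: (term t (ltn_ord t)).
have sQ : (size Q <= b.+1)%N.
  apply/leq_sizeP => j bj; rewrite coef_sum big1 // => t _.
  by case: (term t (ltn_ord t)) => sM _; rewrite nth_default // sM.
by rewrite HmE coefD coefM_top // Qb coef_take_poly ltnSn mulr_natr.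
Qed.

(* For G monic of degree m, the coefficients of G(H) above degree deg H * (m-1)
   are those of H^m: the lower part of G does not reach that far. *)
Lemma coef_comp_monic_high G H m j :
  G \is monic -> size G = m.+1 -> ((size H).-1 * m.-1 < j)%N ->
  (G \Po H)`_j = (H ^+ m)`_j.
Proof.
move=> mG sG hj.
have GE : G = take_poly m G + 'X^m.
  by rewrite {1}(poly_take_lead G) sG (monicP mG) scale1r.
rewrite GE comp_polyD comp_Xn_poly coefD nth_default ?add0r //.
have st : ((size (take_poly m G)).-1 <= m.-1)%N.
  by rewrite -!subn1 leq_sub2r ?size_take_poly.
apply: leq_trans (size_comp_poly_leq _ _) _; apply: leq_ltn_trans hj.
by rewrite mulnC leq_mul2l st orbT.
Qed.

Lemma monic_left_factor G H :
  H \is monic -> (1 < size H)%N -> G \Po H \is monic -> G \is monic.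
Proof. by move=> mH sH; rewrite !monicE lead_coef_comp // (monicP mH) expr1n mulr1. Qed.

End MonicPowers.

Definition nat_saturated (T : pzRingType) (A : {pred T}) : Prop :=
  forall (x : T) (n : nat), (0 < n)%N -> x *+ n \in A -> x \in A.

Section SubringCoefficients.
Variables (T : idomainType) (A : subringClosed T).
Implicit Types (G H p : {poly T}).

(* If H is monic and nonconstant with coefficients in the subring A and G(H)
   has coefficients in A, so has G: the leading coefficient of G is that of
   G(H), and peeling off the leading term decreases the degree. *)
Lemma polyOver_comp_monic H p :
  H \is monic -> (1 < size H)%N -> H \is a polyOver A ->
  p \Po H \is a polyOver A -> p \is a polyOver A.
Proof.
move=> mH sH AH; elim: {p}(size p) {-2}p (leqnn (size p)) => [|n IH] p sp ApH.
  by move: sp; rewrite leqn0 size_poly_eq0 => /eqP ->; rewrite rpred0.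
set c := lead_coef p; set d := (size p).-1; set p' := take_poly d p.
have pE : p = p' + c *: 'X^d by apply: poly_take_lead.
have Ac : c \in A.
  have := polyOverP ApH (size (p \Po H)).-1.
  by rewrite -lead_coefE lead_coef_comp // (monicP mH) expr1n mulr1.
have Ap'H : p' \Po H \is a polyOver A.
  have -> : p' \Po H = p \Po H - c *: H ^+ d.
    by rewrite pE comp_polyD comp_polyZ comp_Xn_poly addrK.
  by rewrite rpredB // polyOverZ // rpredX.
have Ap' : p' \is a polyOver A.
  by apply: IH Ap'H; apply: leq_trans (size_take_poly _ _) _; rewrite /d; lia.
by rewrite pE rpredD // polyOverZ // polyOverXn.
Qed.

(* If A is saturated, G and H are monic with H(0) in A and G(H) has
   coefficients in A, so has H: downward induction on the coefficient index,
   each step being coef_monic_exp_split read at degree a + k(m-1). *)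
Lemma polyOver_monic_right_factor G H :
  nat_saturated A -> G \is monic -> H \is monic -> (1 < size G)%N ->
  H`_0 \in A -> G \Po H \is a polyOver A -> H \is a polyOver A.
Proof.
move=> satA mG mH sG A0 AGH.
set k := (size H).-1; set m := (size G).-1.
have sHk : size H = k.+1 by rewrite /k prednK // size_poly_gt0 monic_neq0.
have sGm : size G = m.+1 by rewrite /m; lia.
apply/polyOverP; apply: (@downward_ind (fun i => H`_i \in A) k) => [i|a ak Aabove].
  rewrite leq_eqVlt => /orP[/eqP <-|ki].
    by rewrite (_ : H`_k = 1) ?rpred1 //; move/monicP: mH; rewrite lead_coefE sHk.
  by rewrite nth_default ?rpred0 // sHk.
have [-> //|a0] := posnP a.
set P := H - take_poly a.+1 H.
have AP : P \is a polyOver A.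
  apply/polyOverP => i; rewrite coefB coef_take_poly.
  by case: ltnP => [_|ai]; rewrite ?subrr ?rpred0 // subr0 Aabove.
apply: (satA _ m); first by rewrite /m; lia.
have high : ((size H).-1 * m.-1 < a + k * m.-1)%N by rewrite -/k; lia.
rewrite -(addKr ((P ^+ m)`_(a + k * m.-1)) (H`_a *+ m)).
rewrite -coef_monic_exp_split // -(coef_comp_monic_high mG sGm high).
by rewrite rpredD ?rpredN //; apply/polyOverP; rewrite ?rpredX.
Qed.

End SubringCoefficients.

Lemma QdotR_saturated (S : idomainType) (R : {pred S}) :
  [pchar S] =i pred0 -> QdotR_cap_S_eq_R R -> nat_saturated R.
Proof.
move=> hchar hQR x n n0 hx; apply/hQR; exists (x *+ n), n; split => //.
have nz : (n%:R : {fraction S}) != 0.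
  rewrite -(rmorph_nat (@FracField.tofrac S)) tofrac_eq0.
  by move/pcharf0P: hchar => ->; rewrite -lt0n.
by rewrite rmorphMn -mulr_natr mulfK.
Qed.

(* A decomposition f = G(H) of a monic f can be normalized by an affine change
   of variable, H1 = (H - H(0)) / lc(H), to one with H1 monic and H1(0) = 0,
   keeping both degrees; lc(H) is a unit because lc(G) lc(H)^m = 1. *)
Lemma monic_decomposition_normalize (S : idomainType) (f G H : {poly S}) :
  f \is monic -> f = G \Po H -> (1 < size G)%N -> (1 < size H)%N ->
  exists G1 H1 : {poly S},
    [/\ f = G1 \Po H1, H1 \is monic, H1`_0 = 0, size G1 = size G & size H1 = size H].
Proof.
move=> mf fE sG sH.
set u := lead_coef H; set c := H`_0.
have uU : u \is a GRing.unit.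
  have : lead_coef G * u ^+ (size G).-1 = 1 by rewrite -lead_coef_comp // -fE; apply/monicP.
  rewrite (_ : (size G).-1 = (size G).-2.+1); last by lia.
  rewrite exprS mulrCA => uv; apply/unitrPr.
  by exists (lead_coef G * u ^+ (size G).-2).
have u0 : u != 0 by rewrite lead_coef_eq0 -size_poly_gt0 ltnW.
have sc : (size (- c%:P) < size H)%N.
  by rewrite size_polyN size_polyC; exact: leq_ltn_trans (leq_b1 _) sH.
set H1 := u^-1 *: (H - c%:P); set L := u%:P * 'X + c%:P.
have LH1 : L \Po H1 = H.
  rewrite comp_polyD comp_polyM !comp_polyC comp_polyX mul_polyC scalerA.
  by rewrite divrr // scale1r subrK.
exists (G \Po L), H1; split.
- by rewrite -comp_polyA LH1.
- by rewrite monicE lead_coefZ lead_coefDl // mulVr.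
- by rewrite coefZ coefB coefC subrr mulr0.
- by rewrite size_comp_poly2 // size_MXaddC polyC_eq0 size_polyC (negbTE u0).
- by rewrite size_scale ?invr_eq0 // size_polyDl.
Qed.

(* R seen as a subring-closed predicate; the closure proof is part of the
   term, so that the subringClosed structure can be inferred from it. *)
Definition subring_pred (S : idomainType) (R : {pred S}) (hsub : is_subring R) :
  {pred S} := R.

Lemma subring_pred_closed (S : idomainType) (R : {pred S}) (hsub : is_subring R) :
  GRing.subring_closed (subring_pred hsub).
Proof. by case: hsub. Qed.

HB.instance Definition _ (S : idomainType) (R : {pred S}) (hsub : is_subring R) :=
  GRing.isSubringClosed.Build S (subring_pred hsub) (subring_pred_closed hsub).

Theorem corollary2p2 (S : idomainType) (R : {pred S})
  (hchar : [pchar S] =i pred0)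
  (hsub : is_subring R)
  (hQR : QdotR_cap_S_eq_R R)
  (f : {poly S})
  (hfR : f \is a polyOver R) (hmon : f \is monic) (hdeg : (2 < size f)%N) :
  indecomposable_over R f -> indecomposable_over (@predT S) f.
Proof.
move=> [_ hind]; split => // -[G [H [_ _ sG sH fE]]]; apply: hind.
have [G1 [H1 [fE1 mH1 H10 sG1 sH1]]] :=
  monic_decomposition_normalize hmon fE (ltnW sG) (ltnW sH).
have sH1' : (1 < size H1)%N by rewrite sH1 ltnW.
have mG1 : G1 \is monic by apply: (monic_left_factor mH1 sH1'); rewrite -fE1.
pose A := subring_pred hsub.
have AH1 : H1 \is a polyOver A.
  apply: (@polyOver_monic_right_factor _ A _ _ (QdotR_saturated hchar hQR) mG1 mH1);
    by rewrite ?sG1 ?(ltnW sG) ?H10 ?rpred0 // -fE1.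
have AG1 : G1 \is a polyOver A by apply: (polyOver_comp_monic mH1 sH1' AH1); rewrite -fE1.
by exists G1, H1; rewrite sG1 sH1.
Qed.
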